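(* Let $n\ge2$, let $u$ be a polar $n$-complex number, and define $\cos u=\sum_{j\ge0}(-1)^ju^{2j}/(2j)!$ and $\sin u=\sum_{j\ge0}(-1)^ju^{2j+1}/(2j+1)!$. Then for even $n$ $$\cos u=e_+\cos v_++e_-\cos v_-+\sum_{k=1}^{n/2-1}\big(e_k\cos v_k\cosh\tilde v_k-\tilde e_k\sin v_k\sinh\tilde v_k\big),$$ $$\sin u=e_+\sin v_++e_-\sin v_-+\sum_{k=1}^{n/2-1}\big(e_k\sin v_k\cosh\tilde v_k+\tilde e_k\cos v_k\sinh\tilde v_k\big),$$ and for odd $n$ the same formulas hold with the $e_-$ terms omitted and the sums running over $k=1,\dots,(n-1)/2$.
   Context: Polar $n$-complex numbers: $u=x_0+h_1x_1+\cdots+h_{n-1}x_{n-1}$, $x_j\in\mathbb{R}$, $h_0=1$, componentwise addition, bilinear multiplication $h_jh_k=h_{(j+k)\bmod n}$. Canonical variables: $v_+=\sum_px_p$; for even $n$, $v_-=\sum_p(-1)^px_p$; $v_k=\sum_px_p\cos(2\pi kp/n)$, $\tilde v_k=\sum_px_p\sin(2\pi kp/n)$ for $k=1,\dots,\lfloor(n-1)/2\rfloor$. Canonical base: $e_+=\frac1n\sum_ph_p$, $e_-=\frac1n\sum_p(-1)^ph_p$ (even $n$), $e_k=\frac2n\sum_p\cos(2\pi kp/n)h_p$, $\tilde e_k=\frac2n\sum_p\sin(2\pi kp/n)h_p$. *)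

From mathcomp Require Import all_boot all_order all_algebra.
From mathcomp Require Import all_classical all_reals all_analysis.
Set Implicit Arguments. Unset Strict Implicit. Unset Printing Implicit Defensive.
Import Order.TTheory GRing.Theory Num.Theory.
Import numFieldNormedType.Exports.
Local Open Scope classical_set_scope.
Local Open Scope ring_scope.

(* A polar n-complex number u = x_0 h_0 + ... + x_{n-1} h_{n-1} is represented
   by its coordinate function 'I_n -> R. *)
Definition pnc (R : realType) (n : nat) := 'I_n -> R.

Definition pone (R : realType) (n : nat) : pnc R n :=
  fun p => if val p == 0%N then 1 else 0.

(* bilinear multiplication with h_j h_k = h_{(j+k) mod n} *)
Definition pmul (R : realType) (n : nat) (u w : pnc R n) : pnc R n :=
  fun m => \sum_(j < n) \sum_(k < n)
             (if ((j + k) %% n == val m)%N then u j * w k else 0).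

Definition ppow (R : realType) (n : nat) (u : pnc R n) (k : nat) : pnc R n :=
  iter k (pmul u) (@pone R n).

Definition pcos_term (R : realType) (n : nat) (u : pnc R n) (j : nat) : pnc R n :=
  fun p => (-1) ^+ j / ((2 * j)`!)%:R * ppow u (2 * j) p.
Definition psin_term (R : realType) (n : nat) (u : pnc R n) (j : nat) : pnc R n :=
  fun p => (-1) ^+ j / ((2 * j).+1`!)%:R * ppow u (2 * j).+1 p.

(* "the series sum_j a_j converges in the n-complex numbers to l"
   (finite dimensional: componentwise convergence of the partial sums) *)
Definition psums_to (R : realType) (n : nat) (a : nat -> pnc R n) (l : pnc R n) :=
  forall p : 'I_n, (fun N => \sum_(0 <= j < N) a j p) @ \oo --> l p.

Definition cosh (R : realType) (x : R) : R := (expR x + expR (- x)) / 2.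
Definition sinh (R : realType) (x : R) : R := (expR x - expR (- x)) / 2.

Definition vplus (R : realType) (n : nat) (u : pnc R n) : R := \sum_(p < n) u p.
Definition vminus (R : realType) (n : nat) (u : pnc R n) : R :=
  \sum_(p < n) (-1) ^+ p * u p.
Definition vk (R : realType) (n : nat) (u : pnc R n) (k : nat) : R :=
  \sum_(p < n) u p * cos (2 * pi * k%:R * p%:R / n%:R).
Definition vtk (R : realType) (n : nat) (u : pnc R n) (k : nat) : R :=
  \sum_(p < n) u p * sin (2 * pi * k%:R * p%:R / n%:R).

Definition eplus (R : realType) (n : nat) : pnc R n := fun p => 1 / n%:R.
Definition eminus (R : realType) (n : nat) : pnc R n := fun p => (-1) ^+ p / n%:R.
Definition ek (R : realType) (n : nat) (k : nat) : pnc R n :=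
  fun p => 2 / n%:R * cos (2 * pi * k%:R * p%:R / n%:R).
Definition etk (R : realType) (n : nat) (k : nat) : pnc R n :=
  fun p => 2 / n%:R * sin (2 * pi * k%:R * p%:R / n%:R).

Arguments pone R n : clear implicits.
Arguments eplus R n : clear implicits.
Arguments eminus R n : clear implicits.
Arguments ek R n k : clear implicits.
Arguments etk R n k : clear implicits.

(* Let [omega = exp (2 i pi / n)] and [dft u k = \sum_p u_p omega^(k p)].  Since
   [h_j h_k = h_((j + k) mod n)] and [omega^n = 1], each [dft _ k] is a ring
   morphism from polar n-complex numbers to the complex numbers, and
   [dft u k = v_k + i ṽ_k].  It maps the partial sums of [cos u] and [sin u] to
   those of the complex cosine and sine at [v_k + i ṽ_k]; writing these as
   [(exp (i z) +- exp (- i z)) / 2 (i)] and the exponential series as a Cauchy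
   product of [exp a] and [cos b + i sin b], they converge to
   [cos v_k cosh ṽ_k - i sin v_k sinh ṽ_k] and
   [sin v_k cosh ṽ_k + i cos v_k sinh ṽ_k].
   Inverting the transform, [u_p = 1/n \sum_k Re (dft u k * omega^(- k p))], and
   pairing [k] with [n - k], whose transform is the conjugate one, yields the
   real formulas with the canonical base [e_+, e_-, e_k, ẽ_k]. *)

From mathcomp Require Import all_boot all_order all_algebra.
From mathcomp Require Import all_classical all_reals all_analysis.
From mathcomp Require Import zify ring lra.
Import Order.TTheory GRing.Theory Num.Theory.
Import numFieldNormedType.Exports.
(* Imported after [Num.Theory] so that [Re] and [Im] are the projections of [R[i]]. *)
From mathcomp Require Import complex.
Local Open Scope classical_set_scope.
Local Open Scope ring_scope.

Section CauchyProduct.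
Variable R : realType.
Implicit Types x y : R ^nat.

Definition cauchy_series x y N : R :=
  \sum_(0 <= m < N) \sum_(0 <= k < m.+1) x k * y (m - k)%N.

Lemma cauchy_seriesE x y N :
  cauchy_series x y N = \sum_(0 <= k < N) x k * \sum_(0 <= l < N - k) y l.
Proof.
elim: N => [|N IH]; first by rewrite /cauchy_series !big_geq.
rewrite /cauchy_series big_nat_recr //= -/(cauchy_series x y N) IH.
rewrite [in RHS]big_nat_recr //= subSnn big_nat1 big_nat_recr //= subnn addrA.
congr (_ + _); rewrite -big_split /=; apply: eq_big_nat => k /andP[_ kN].
by rewrite subSn ?(ltnW kN) // big_nat_recr //= mulrDr.
Qed.

Lemma series_mulB_cauchy x y N :
  series x N * series y N - cauchy_series x y N =
  \sum_(0 <= k < N) x k * \sum_(N - k <= l < N) y l.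
Proof.
rewrite cauchy_seriesE /series /= mulr_suml -sumrB.
apply: eq_big_nat => k /andP[_ kN]; rewrite -mulrBr; congr (_ * _).
by rewrite (big_cat_nat (leq0n (N - k)) (leq_subr k N)) /= addrAC subrr add0r.
Qed.

Lemma norm_series_mulB_cauchy x y N :
  `|series x N * series y N - cauchy_series x y N| <=
  series (fun k => `|x k|) N * series (fun k => `|y k|) N
    - cauchy_series (fun k => `|x k|) (fun k => `|y k|) N.
Proof.
rewrite !series_mulB_cauchy; apply: le_trans (ler_norm_sum _ _ _) _.
by apply: ler_sum_nat => k _; rewrite normrM ler_wpM2l //; exact: ler_norm_sum.
Qed.

Lemma cauchy_series_ge_half x y N : (forall k, 0 <= x k) -> (forall k, 0 <= y k) ->
  series x N./2 * series y N./2 <= cauchy_series x y N.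
Proof.
move=> x_ge0 y_ge0; rewrite cauchy_seriesE /series /= mulr_suml.
have half_le : (N./2 <= N)%N by lia.
rewrite (big_cat_nat (leq0n _) half_le) /= -[leLHS]addr0.
apply: lerD; last by apply: sumr_ge0 => k _; rewrite mulr_ge0 ?sumr_ge0.
apply: ler_sum_nat => k /andP[_ kN]; rewrite ler_wpM2l //.
rewrite (big_cat_nat (leq0n _) (_ : N./2 <= N - k)%N) /=; last by lia.
by rewrite lerDl sumr_ge0.
Qed.

(* Mertens: the defect [series x N * series y N - cauchy_series x y N] is
   bounded by the same defect for [|x|] and [|y|], hence by [P N - P N./2]
   where [P] is the product of their partial sums, and this tends to 0. *)
Lemma cvg_cauchy_series x y (X Y : R) :
  series x @ \oo --> X -> series y @ \oo --> Y ->
  cvgn (series (fun k => `|x k|)) -> cvgn (series (fun k => `|y k|)) ->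
  cauchy_series x y @ \oo --> X * Y.
Proof.
move=> cvx cvy cvax cvay.
pose P N := series (fun k => `|x k|) N * series (fun k => `|y k|) N.
pose g N := P N - P N./2.
have g_cvg0 : g @ \oo --> 0.
  have P_cvg : cvgn P by exact: is_cvgM.
  rewrite -(subrr (limn P)); apply: cvgB => //; apply: cvg_comp P_cvg.
  by rewrite (_ : half = divn^~ 2); [exact: cvg_divnr | apply/funext => N; rewrite divn2].
have defect_cvg0 : (fun N => series x N * series y N - cauchy_series x y N) @ \oo --> 0.
  apply: (@squeeze_cvgr _ _ _ _ (- g) g); last exact: g_cvg0.
  - near=> N; rewrite /= -ler_norml; apply: le_trans (norm_series_mulB_cauchy _ _ _) _.
    by rewrite lerD2l lerN2 cauchy_series_ge_half.
  - by rewrite -oppr0; apply: cvgN.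
have : (fun N => series x N * series y N
    - (series x N * series y N - cauchy_series x y N)) @ \oo --> X * Y - 0.
  by apply: cvgB => //; exact: cvgM.
rewrite subr0.
by apply: cvg_trans; apply: near_eq_cvg; near=> N; rewrite /= opprB addrCA subrr addr0.
Unshelve. all: end_near.
Qed.

End CauchyProduct.
Arguments cauchy_series {R}.

Local Open Scope complex_scope.

Section ComplexArithmetic.
Variable R : realType.
Implicit Types (x y z : R[i]) (t : R).

Lemma complex_eta z : z = Re z +i* Im z. Proof. by case: z. Qed.

Lemma Re_add x y : Re (x + y) = Re x + Re y. Proof. by case: x; case: y. Qed.
Lemma Im_add x y : Im (x + y) = Im x + Im y. Proof. by case: x; case: y. Qed.
Lemma Re_sub x y : Re (x - y) = Re x - Re y. Proof. by case: x; case: y. Qed.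
Lemma Im_sub x y : Im (x - y) = Im x - Im y. Proof. by case: x; case: y. Qed.
Lemma Re_mul x y : Re (x * y) = Re x * Re y - Im x * Im y.
Proof. by case: x; case: y. Qed.
Lemma Im_mul x y : Im (x * y) = Re x * Im y + Im x * Re y.
Proof. by case: x; case: y. Qed.

Lemma Re_sum (I : Type) (r : seq I) (F : I -> R[i]) :
  Re (\sum_(i <- r) F i) = \sum_(i <- r) Re (F i).
Proof. by apply: (big_morph (@Re R)) => // x y; rewrite Re_add. Qed.
Lemma Im_sum (I : Type) (r : seq I) (F : I -> R[i]) :
  Im (\sum_(i <- r) F i) = \sum_(i <- r) Im (F i).
Proof. by apply: (big_morph (@Im R)) => // x y; rewrite Im_add. Qed.

Definition expi t : R[i] := cos t +i* sin t.

Lemma expiD s t : expi (s + t) = expi s * expi t.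
Proof. by rewrite /expi cosD sinD; simpc; congr (_ +i* _); ring. Qed.

Lemma expiMn t m : expi (t *+ m) = expi t ^+ m.
Proof.
elim: m => [|m IH]; first by rewrite /expi mulr0n cos0 sin0.
by rewrite mulrS expiD IH exprS.
Qed.

Lemma expi_mulJ t : expi t * conjc (expi t) = 1.
Proof. by rewrite /expi; simpc; rewrite -!expr2 cos2Dsin2; congr (_ +i* _); ring. Qed.

Lemma cos_lt1 t : 0 < t < pi *+ 2 -> cos t < 1.
Proof.
move=> t_bd; have : 0 < sin (t / 2) by apply: sin_gt0_pi; lra.
rewrite -[t in cos t](divfK (_ : 2 != 0)) // mulr_natr cos_mulr2n cos2sin2.
by move=> s_gt0; nra.
Qed.

End ComplexArithmetic.
Arguments expi {R}.

(* [R[i]] is not equipped with a topology, so convergence of complex sequences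
   is taken componentwise. *)
Section ComplexConvergence.
Variable R : realType.
Implicit Types (s t : nat -> R[i]) (c l : R[i]).

Definition complex_cvg s l :=
  (fun N => Re (s N)) @ \oo --> Re l /\ (fun N => Im (s N)) @ \oo --> Im l.

Lemma complex_cvgD s t l l' : complex_cvg s l -> complex_cvg t l' ->
  complex_cvg (fun N => s N + t N) (l + l').
Proof.
move=> [sRe sIm] [tRe tIm]; split.
- by under eq_fun do rewrite Re_add; rewrite Re_add; exact: cvgD.
- by under eq_fun do rewrite Im_add; rewrite Im_add; exact: cvgD.
Qed.

Lemma complex_cvgB s t l l' : complex_cvg s l -> complex_cvg t l' ->
  complex_cvg (fun N => s N - t N) (l - l').
Proof.
move=> [sRe sIm] [tRe tIm]; split.
- by under eq_fun do rewrite Re_sub; rewrite Re_sub; exact: cvgB.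
- by under eq_fun do rewrite Im_sub; rewrite Im_sub; exact: cvgB.
Qed.

Lemma complex_cvgMl c s l : complex_cvg s l -> complex_cvg (fun N => c * s N) (c * l).
Proof.
move=> [sRe sIm]; split.
- by under eq_fun do rewrite Re_mul; rewrite Re_mul; apply: cvgB; exact: cvgMl_tmp.
- by under eq_fun do rewrite Im_mul; rewrite Im_mul; apply: cvgD; exact: cvgMl_tmp.
Qed.

Lemma complex_cvg_double s l :
  complex_cvg s l -> complex_cvg (fun N => s (2 * N)%N) l.
Proof.
have double := @cvg_mulnl 2 isT.
by move=> [sRe sIm]; split; [exact: cvg_comp double sRe | exact: cvg_comp double sIm].
Qed.

End ComplexConvergence.
Arguments complex_cvg {R}.

Section ComplexExponential.
Variable R : realType.
Implicit Types z w : R[i].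

Definition expC_coeff z m : R[i] := (m`!%:R^-1)%:C * z ^+ m.

Lemma expC_coeffD z w m : expC_coeff (z + w) m =
  \sum_(0 <= k < m.+1) expC_coeff z k * expC_coeff w (m - k).
Proof.
rewrite /expC_coeff addrC exprDn mulr_sumr big_mkord; apply: eq_bigr => -[k /=].
rewrite ltnS => km _.
have fact_split : m`!%:R^-1 * 'C(m, k)%:R = k`!%:R^-1 * (m - k)`!%:R^-1 :> R.
  rewrite -(bin_fact km) !natrM; field.
  by rewrite !pnatr_eq0 -!lt0n bin_gt0 km !fact_gt0.
transitivity ((m`!%:R^-1 * 'C(m, k)%:R)%:C * (z ^+ k * w ^+ (m - k))).
  by rewrite -mulr_natr rmorphM rmorph_nat; ring.
by rewrite fact_split rmorphM; ring.
Qed.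

Lemma expC_coeff_real (a : R) k : expC_coeff a%:C k = (exp_coeff a k)%:C.
Proof. by rewrite /expC_coeff /exp_coeff /= rmorphM rmorphXn mulrC. Qed.

Lemma expC_coeff_imag (b : R) m :
  expC_coeff (0 +i* b) m = cos_coeff b m +i* sin_coeff b m.
Proof.
have ib_even q : (0 +i* b) ^+ q.*2 = ((-1) ^+ q * b ^+ q.*2)%:C.
  have -> : 0 +i* b = 'i * b%:C by simpc.
  by rewrite -mul2n exprMn exprM sqr_i rmorphM !rmorphXn rmorphN1.
rewrite /expC_coeff /cos_coeff /sin_coeff /= -(odd_double_half m).
case: (odd m); rewrite ?add1n ?add0n /= ?odd_double /= ?doubleK.
- by rewrite exprS ib_even; simpc; congr (_ +i* _); rewrite exprS; ring.
- by rewrite ib_even; simpc; rewrite -exprnP; congr (_ +i* _); ring.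
Qed.

Lemma expC_series_cauchy (a b : R) N :
  series (expC_coeff (a +i* b)) N =
  cauchy_series (exp_coeff a) (cos_coeff b) N
    +i* cauchy_series (exp_coeff a) (sin_coeff b) N.
Proof.
have -> : a +i* b = a%:C + (0 +i* b) by simpc.
rewrite /series /= [LHS]complex_eta Re_sum Im_sum.
by congr (_ +i* _); apply: eq_bigr => m _;
  rewrite expC_coeffD ?Re_sum ?Im_sum; apply: eq_bigr => k _;
  rewrite expC_coeff_real expC_coeff_imag; simpc.
Qed.

Lemma norm_trig_coeff_le (b : R) k :
  `|cos_coeff b k| <= exp_coeff `|b| k /\ `|sin_coeff b k| <= exp_coeff `|b| k.
Proof.
rewrite /exp_coeff /cos_coeff /sin_coeff /= !normrM normfV !normr_nat !normrX.
rewrite normrN normr1 !expr1n mulr1.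
by case: odd; rewrite /= ?mul0r ?mul1r; split; rewrite // divr_ge0 ?exprn_ge0.
Qed.

Definition expC z : R[i] := (expR (Re z))%:C * expi (Im z).

Lemma complex_cvg_expC z : complex_cvg (series (expC_coeff z)) (expC z).
Proof.
case: z => a b; rewrite /expC /expi /=; simpc.
have cvg_norm_exp : cvgn (series (fun k => `|exp_coeff a k|)).
  by have := is_cvg_series_exp_coeff `|a|; rewrite -normed_series_exp_coeff.
have cvg_norm_trig (f : R ^nat) : (forall k, `|f k| <= exp_coeff `|b| k) ->
    cvgn (series (fun k => `|f k|)).
  move=> f_le; apply: series_le_cvg f_le (is_cvg_series_exp_coeff _) => k //.
  by rewrite /exp_coeff /= divr_ge0.
split; under eq_fun do rewrite expC_series_cauchy /=;
  apply: cvg_cauchy_series => //; rewrite ?unlock.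
- exact: is_cvg_series_exp_coeff.
- exact: is_cvg_series_cos_coeff.
- by apply: cvg_norm_trig => k; case: (norm_trig_coeff_le b k).
- exact: is_cvg_series_exp_coeff.
- exact: is_cvg_series_sin_coeff.
- by apply: cvg_norm_trig => k; case: (norm_trig_coeff_le b k).
Qed.

End ComplexExponential.
Arguments expC_coeff {R}.
Arguments expC {R}.

Lemma series_double (V : zmodType) (u : V ^nat) N :
  series u (2 * N)%N = \sum_(0 <= j < N) (u (2 * j)%N + u (2 * j).+1%N).
Proof.
elim: N => [|N IH]; first by rewrite /series /= !big_geq.
by rewrite mulnS !add2n !seriesSr IH /series /= big_nat_recr //= addrA.
Qed.

Section ComplexCosSin.
Variable R : realType.
Implicit Types z : R[i].

Definition cosC_coeff z j : R[i] := ((-1) ^+ j / (2 * j)`!%:R)%:C * z ^+ (2 * j).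
Definition sinC_coeff z j : R[i] := ((-1) ^+ j / (2 * j).+1`!%:R)%:C * z ^+ (2 * j).+1.

Definition cosC z : R[i] :=
  (cos (Re z) * cosh (Im z)) +i* (- (sin (Re z) * sinh (Im z))).
Definition sinC z : R[i] :=
  (sin (Re z) * cosh (Im z)) +i* (cos (Re z) * sinh (Im z)).

Let i_neq0 : 'i != 0 :> R[i]. Proof. by rewrite eq_complex /= oner_eq0 andbF. Qed.

Let iz_even z j : ('i * z) ^+ (2 * j) = (-1) ^+ j * z ^+ (2 * j).
Proof. by rewrite exprMn exprM sqr_i. Qed.
Let Niz_even z j : (- ('i * z)) ^+ (2 * j) = (-1) ^+ j * z ^+ (2 * j).
Proof. by rewrite exprM sqrrN -exprM iz_even. Qed.

Lemma cosC_series_expC z N : series (cosC_coeff z) N =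
  2^-1 * (series (expC_coeff ('i * z)) (2 * N)%N
          + series (expC_coeff (- ('i * z))) (2 * N)%N).
Proof.
rewrite !series_double -big_split mulr_sumr /series /=; apply: eq_bigr => j _.
rewrite /cosC_coeff /expC_coeff !exprSr iz_even Niz_even rmorphM /= rmorphXn rmorphN1.
by field; rewrite !pnatr_eq0 -!lt0n !fact_gt0.
Qed.

Lemma sinC_series_expC z N : series (sinC_coeff z) N =
  (2 * 'i)^-1 * (series (expC_coeff ('i * z)) (2 * N)%N
                 - series (expC_coeff (- ('i * z))) (2 * N)%N).
Proof.
rewrite !series_double -sumrB mulr_sumr /series /=; apply: eq_bigr => j _.
rewrite /sinC_coeff /expC_coeff !exprSr iz_even Niz_even rmorphM /= rmorphXn rmorphN1.
by field; rewrite i_neq0 !pnatr_eq0 -!lt0n !fact_gt0.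
Qed.

Let two_neq0 : 2 != 0 :> R[i]. Proof. by rewrite pnatr_eq0. Qed.

Lemma cosC_expC z : cosC z = 2^-1 * (expC ('i * z) + expC (- ('i * z))).
Proof.
apply: (mulfI two_neq0); rewrite mulVKf //; case: z => a b.
rewrite /cosC /expC /expi /cosh /sinh /=; simpc.
by rewrite cosN sinN; congr (_ +i* _); field.
Qed.

Lemma sinC_expC z : sinC z = (2 * 'i)^-1 * (expC ('i * z) - expC (- ('i * z))).
Proof.
apply: (mulfI (mulf_neq0 two_neq0 i_neq0)); rewrite mulVKf ?mulf_neq0 //.
case: z => a b; rewrite /sinC /expC /expi /cosh /sinh /=; simpc.
by rewrite cosN sinN; congr (_ +i* _); field.
Qed.

Lemma complex_cvg_cosC_series z : complex_cvg (series (cosC_coeff z)) (cosC z).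
Proof.
rewrite cosC_expC (funext (cosC_series_expC z)).
by apply/complex_cvgMl/complex_cvgD; apply/complex_cvg_double/complex_cvg_expC.
Qed.

Lemma complex_cvg_sinC_series z : complex_cvg (series (sinC_coeff z)) (sinC z).
Proof.
rewrite sinC_expC (funext (sinC_series_expC z)).
by apply/complex_cvgMl/complex_cvgB; apply/complex_cvg_double/complex_cvg_expC.
Qed.

Lemma cosC_conj z : cosC (conjc z) = conjc (cosC z).
Proof.
by case: z => a b; rewrite /cosC /cosh /sinh /= opprK; simpc; congr (_ +i* _); ring.
Qed.

Lemma sinC_conj z : sinC (conjc z) = conjc (sinC z).
Proof.
by case: z => a b; rewrite /sinC /cosh /sinh /= opprK; simpc; congr (_ +i* _); ring.
Qed.

Lemma cosC_real (a : R) : cosC a%:C = (cos a)%:C.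
Proof.
by rewrite /cosC /cosh /sinh /= oppr0 expR0 subrr; simpc; congr (_ +i* _); field.
Qed.

Lemma sinC_real (a : R) : sinC a%:C = (sin a)%:C.
Proof.
by rewrite /sinC /cosh /sinh /= oppr0 expR0 subrr; simpc; congr (_ +i* _); field.
Qed.

End ComplexCosSin.

Section ReflectedSums.
Variables (R : realType) (G : nat -> R).

Lemma sum_reflect_tail m h : (h < m)%N ->
  (forall k, (0 < k < m)%N -> G (m - k)%N = G k) ->
  \sum_(h.+1 <= k < m) G k = \sum_(1 <= k < m - h) G k.
Proof.
move=> hm G_sym.
rewrite (@eq_big_nat _ _ _ h.+1 m _ (fun k => G (m - k)%N)); last first.
  by move=> k /andP[hk km]; rewrite G_sym //; apply/andP; split; lia.
rewrite big_nat_rev /= (@eq_big_nat _ _ _ h.+1 m _ (fun k => G (k - h)%N)); last first.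
  by move=> k /andP[hk km]; congr G; lia.
by rewrite -addn1 addnC big_addn; apply: eq_big_nat => k _; rewrite addnK.
Qed.

Lemma sum_reflect_even h : (0 < h)%N ->
  (forall k, (0 < k < h.*2)%N -> G (h.*2 - k)%N = G k) ->
  \sum_(k < h.*2) G k = G 0%N + G h + 2 * \sum_(1 <= k < h) G k.
Proof.
move=> h_gt0 G_sym; rewrite -(big_mkord xpredT) -addnn in G_sym *.
rewrite big_ltn; last by lia.
rewrite (big_cat_nat (n := h)) //=; last by lia.
rewrite [\sum_(h <= k < h + h) _]big_ltn; last by lia.
rewrite (@sum_reflect_tail (h + h) h) //; last by lia.
by rewrite (_ : h + h - h = h)%N ?mulr2n ?mulrDl ?mul1r; [ring | lia].
Qed.

Lemma sum_reflect_odd h :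
  (forall k, (0 < k < h.*2.+1)%N -> G (h.*2.+1 - k)%N = G k) ->
  \sum_(k < h.*2.+1) G k = G 0%N + 2 * \sum_(1 <= k < h.+1) G k.
Proof.
move=> G_sym; rewrite -(big_mkord xpredT) -addnn in G_sym *.
rewrite big_ltn // (big_cat_nat (n := h.+1)) //=; last by lia.
rewrite (@sum_reflect_tail (h + h).+1 h) //; last by lia.
by rewrite (_ : (h + h).+1 - h = h.+1)%N ?mulr2n ?mulrDl ?mul1r; [ring | lia].
Qed.

End ReflectedSums.

Section DiscreteFourierTransform.
Variables (R : realType) (n : nat).
Hypothesis n_gt0 : (0 < n)%N.
Implicit Types (x y u : pnc R n) (z : R[i]) (p q : 'I_n).

Definition omega : R[i] := expi (2 * pi / n%:R).

Definition dft x k : R[i] := \sum_(p < n) (x p)%:C * omega ^+ (k * p)%N.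

Let n_neq0 : n%:R != 0 :> R. Proof. by rewrite pnatr_eq0 -lt0n. Qed.

Lemma omega_exprE (k p : nat) : omega ^+ (k * p)%N = expi (2 * pi * k%:R * p%:R / n%:R).
Proof. by rewrite /omega -expiMn -[_ *+ (k * p)%N]mulr_natr natrM; congr expi; ring. Qed.

Lemma omega_order : omega ^+ n = 1.
Proof.
rewrite /omega -expiMn -[_ *+ n]mulr_natr divfK // /expi mulr_natl.
by rewrite cos2pi sin2pi.
Qed.

Lemma omega_expr_eq1 m : (omega ^+ m == 1) = (n %| m)%N.
Proof.
rewrite -(expr_mod m omega_order) /dvdn.
have [->|r_gt0] := posnP (m %% n); first by rewrite expr0 !eqxx.
have r_lt_n : ((m %% n)%:R < n%:R :> R) by rewrite ltr_nat ltn_pmod.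
have two_pi_gt0 : 0 < 2 * pi :> R by rewrite mulr_gt0 ?pi_gt0.
apply/negbTE; rewrite /omega -expiMn; apply/eqP => /(congr1 (@Re R)) /= /eqP.
rewrite lt_eqF // cos_lt1 // -[_ *+ (m %% n)]mulr_natr -[pi *+ 2]mulr_natl mulrAC.
rewrite ltr_pdivrMr ?ltr0n // ltr_pM2l // r_lt_n andbT.
by rewrite divr_gt0 ?ltr0n // mulr_gt0 // ltr0n.
Qed.

Lemma sum_omega_expr m :
  \sum_(k < n) (omega ^+ m) ^+ k = if (n %| m)%N then n%:R else 0.
Proof.
rewrite -omega_expr_eq1; have [/eqP->|w_neq1] := ifPn.
  by rewrite (eq_bigr (fun=> 1)) ?sumr_const ?card_ord // => k _; rewrite expr1n.
have := subrX1 (omega ^+ m) n.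
rewrite -exprM mulnC exprM omega_order expr1n subrr => /esym/eqP.
by rewrite mulf_eq0 subr_eq0 (negbTE w_neq1) => /eqP.
Qed.

Lemma conjc_omega_expr m : (m <= n)%N -> conjc (omega ^+ m) = omega ^+ (n - m).
Proof.
move=> le_mn.
have w_mul : omega ^+ m * omega ^+ (n - m) = 1 by rewrite -exprD subnKC ?omega_order.
have w_mulJ : omega ^+ m * conjc (omega ^+ m) = 1 by rewrite /omega -expiMn expi_mulJ.
by rewrite -[LHS]mul1r -w_mul mulrAC w_mulJ mul1r.
Qed.

Lemma dftE x k : dft x k = vk x k +i* vtk x k.
Proof.
rewrite [LHS]complex_eta Re_sum Im_sum.
by congr (_ +i* _); apply: eq_bigr => p _; rewrite omega_exprE /expi; simpc.
Qed.

Lemma dft_pmul x y k : dft (pmul x y) k = dft x k * dft y k.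
Proof.
rewrite /dft /pmul mulr_suml.
under eq_bigr do rewrite rmorph_sum mulr_suml.
rewrite exchange_big /=; apply: eq_bigr => j _.
under eq_bigr do rewrite rmorph_sum mulr_suml.
rewrite exchange_big mulr_sumr /=; apply: eq_bigr => l _.
rewrite (bigD1 (Ordinal (ltn_pmod (j + l) n_gt0))) //= eqxx big1 => [|m].
  have omega_k_order : (omega ^+ k) ^+ n = 1.
    by rewrite -exprM mulnC exprM omega_order expr1n.
  by rewrite addr0 exprM expr_mod // -exprM mulnDr exprD rmorphM; ring.
by rewrite -val_eqE /= eq_sym => /negbTE->; rewrite mul0r.
Qed.

Lemma dft_pone k : dft (pone R n) k = 1.
Proof.
rewrite /dft (bigD1 (Ordinal n_gt0)) //= big1 => [|p /negbTE p_neq0].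
  by rewrite /pone /= muln0 expr0 mulr1 addr0.
by rewrite /pone -val_eqE /= in p_neq0 *; rewrite p_neq0 mul0r.
Qed.

Lemma dft_ppow x m k : dft (ppow x m) k = dft x k ^+ m.
Proof.
elim: m => [|m IH]; first by rewrite expr0 dft_pone.
by rewrite /ppow iterS -/(ppow x m) dft_pmul IH exprS.
Qed.

Lemma dft_power_sum (c : R ^nat) (d : nat -> nat) x N k :
  dft (fun p => \sum_(0 <= j < N) c j * ppow x (d j) p) k =
  series (fun j => (c j)%:C * dft x k ^+ d j) N.
Proof.
rewrite /dft /series /=; under eq_bigr do rewrite rmorph_sum mulr_suml.
rewrite exchange_big /=; apply: eq_bigr => j _.
by rewrite -dft_ppow /dft mulr_sumr; apply: eq_bigr => p _; rewrite rmorphM mulrA.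
Qed.

Lemma dft_inversion x p :
  \sum_(k < n) dft x k * conjc (omega ^+ (k * p)%N) = n%:R * (x p)%:C.
Proof.
have conj_w k : conjc (omega ^+ (k * p)%N) = omega ^+ (n - p) ^+ k.
  by rewrite mulnC exprM rmorphXn /= conjc_omega_expr // ltnW.
have dvd_iff q : (n %| q + (n - p))%N = (q == p :> nat).
  have [q_lt p_lt] := (ltn_ord q, ltn_ord p).
  by apply/dvdnP/eqP => [[[|[|m]] ?]|->]; [lia | lia | lia | exists 1%N; lia].
have inner q : \sum_(k < n) (x q)%:C * omega ^+ (k * q)%N * omega ^+ (n - p) ^+ k
    = (x q)%:C * (if q == p :> nat then n%:R else 0).
  rewrite -dvd_iff -sum_omega_expr mulr_sumr; apply: eq_bigr => k _.
  by rewrite -mulrA mulnC exprM -exprMn -exprD.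
under eq_bigr do rewrite conj_w /dft mulr_suml.
rewrite exchange_big /= (bigD1 p) //= [X in _ + X]big1 => [|q q_neq_p].
  by rewrite inner eqxx addr0 mulrC.
by rewrite inner val_eqE (negbTE q_neq_p) mulr0.
Qed.

Lemma Re_dft_inversion x p :
  x p = n%:R^-1 * \sum_(k < n) Re (dft x k * conjc (omega ^+ (k * p)%N)).
Proof.
have := congr1 (@Re R) (dft_inversion x p).
by rewrite Re_sum -(rmorph_nat (real_complex R)) -rmorphM /= => ->; rewrite mulKf.
Qed.

Lemma omega_expr_subn k m :
  (k <= n)%N -> omega ^+ ((n - k) * m)%N = conjc (omega ^+ (k * m)%N).
Proof. by move=> le_kn; rewrite exprM -conjc_omega_expr // exprM !rmorphXn. Qed.

Lemma dft_subn x k : (k <= n)%N -> dft x (n - k) = conjc (dft x k).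
Proof.
move=> le_kn; rewrite /dft rmorph_sum; apply: eq_bigr => p _.
by rewrite rmorphM /= oppr0 complexr0 omega_expr_subn.
Qed.

Lemma dft0 x : dft x 0 = (vplus x)%:C.
Proof.
by rewrite /dft /vplus rmorph_sum; apply: eq_bigr => p _; rewrite mul0n expr0 mulr1.
Qed.

Lemma omega_half h : n = h.*2 -> omega ^+ h = -1.
Proof.
move=> nh; have h_gt0 : (0 < h)%N by rewrite -double_gt0 -nh.
have not_dvd : ~~ (n %| h)%N by apply/negP => /(dvdn_leq h_gt0); lia.
have : (omega ^+ h) ^+ 2 == 1 by rewrite -exprM muln2 -nh omega_order.
by rewrite sqrf_eq1 omega_expr_eq1 (negbTE not_dvd) => /eqP.
Qed.

Lemma dft_half x h : n = h.*2 -> dft x h = (vminus x)%:C.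
Proof.
move=> nh; rewrite /dft /vminus rmorph_sum; apply: eq_bigr => p _.
by rewrite exprM omega_half // rmorphM rmorphXn rmorphN1 mulrC.
Qed.

Lemma Re_mul_conjc_omega_subn (w : nat -> R[i]) k m : (k <= n)%N ->
  w (n - k)%N = conjc (w k) ->
  Re (w (n - k)%N * conjc (omega ^+ ((n - k) * m)%N)) =
  Re (w k * conjc (omega ^+ (k * m)%N)).
Proof.
move=> le_kn ->; rewrite omega_expr_subn // conjcK.
by case: (w k) => a b; case: (omega ^+ _) => c d; simpc; ring.
Qed.

Section HermitianSums.
Variables (w : nat -> R[i]) (p : 'I_n).
Hypothesis w_hermitian : forall k, (k <= n)%N -> w (n - k)%N = conjc (w k).

Let G k := Re (w k * conjc (omega ^+ (k * p)%N)).

Let G_reflect k : (0 < k < n)%N -> G (n - k)%N = G k.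
Proof.
by case/andP=> _ /ltnW le_kn; exact: Re_mul_conjc_omega_subn (w_hermitian _ le_kn).
Qed.

Let G0 : G 0%N = Re (w 0%N).
Proof. by rewrite /G mul0n expr0 conjc1 mulr1. Qed.

Lemma sum_Re_hermitian_even h : n = h.*2 ->
  \sum_(k < n) Re (w k * conjc (omega ^+ (k * p)%N)) =
  Re (w 0%N) + (-1) ^+ p * Re (w h)
    + 2 * \sum_(1 <= k < h) Re (w k * conjc (omega ^+ (k * p)%N)).
Proof.
move=> nh; have h_gt0 : (0 < h)%N by rewrite -double_gt0 -nh.
have := @sum_reflect_even R G h h_gt0; rewrite -nh => /(_ G_reflect) ->; rewrite G0.
rewrite /G exprM omega_half // -(rmorphN1 (real_complex R)) -rmorphXn conjc_real.
by case: (w h) => a b; simpc; rewrite mulrC.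
Qed.

Lemma sum_Re_hermitian_odd h : n = h.*2.+1 ->
  \sum_(k < n) Re (w k * conjc (omega ^+ (k * p)%N)) =
  Re (w 0%N) + 2 * \sum_(1 <= k < h.+1) Re (w k * conjc (omega ^+ (k * p)%N)).
Proof.
by move=> nh; have := @sum_reflect_odd R G h; rewrite -nh G0 => /(_ G_reflect).
Qed.

End HermitianSums.


Lemma Re_mul_conjc_omegaE z k p :
  2 / n%:R * Re (z * conjc (omega ^+ (k * p)%N)) = ek R n k p * Re z + etk R n k p * Im z.
Proof.
by rewrite omega_exprE /expi /ek /etk; case: z => a b; simpc; rewrite /=; ring.
Qed.

Section PowerSeries.
Variables (c : R ^nat) (d : nat -> nat) (F : R[i] -> R[i]) (u : pnc R n).
Hypothesis F_cvg : forall z, complex_cvg (series (fun j => (c j)%:C * z ^+ d j)) (F z).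
Hypothesis F_conjc : forall z, F (conjc z) = conjc (F z).

Lemma psums_to_dft :
  psums_to (fun j p => c j * ppow u (d j) p)
    (fun p => n%:R^-1 * \sum_(k < n) Re (F (dft u k) * conjc (omega ^+ (k * p)%N))).
Proof.
move=> p /=.
have -> : (fun N => \sum_(0 <= j < N) c j * ppow u (d j) p) = fun N =>
    n%:R^-1 * \sum_(k < n) Re (conjc (omega ^+ (k * p)%N)
                                * series (fun j => (c j)%:C * dft u k ^+ d j) N).
  apply/funext => N.
  rewrite (Re_dft_inversion (fun q => \sum_(0 <= j < N) c j * ppow u (d j) q)).
  by under eq_bigr do rewrite dft_power_sum mulrC.
apply: cvgMl_tmp; apply: cvg_big => // [|k _]; first exact: add_continuous.
have [Re_cvg _] := complex_cvgMl R (conjc (omega ^+ (k * p)%N)) _ _ (F_cvg (dft u k)).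
by rewrite [F _ * _]mulrC.
Qed.

Let F_dft_hermitian k : (k <= n)%N -> F (dft u (n - k)) = conjc (F (dft u k)).
Proof. by move=> le_kn; rewrite dft_subn. Qed.

Lemma psums_to_dft_even h : n = h.*2 ->
  psums_to (fun j p => c j * ppow u (d j) p)
    (fun p => eplus R n p * Re (F (vplus u)%:C) + eminus R n p * Re (F (vminus u)%:C)
       + \sum_(1 <= k < h) (ek R n k p * Re (F (vk u k +i* vtk u k))
                          + etk R n k p * Im (F (vk u k +i* vtk u k)))).
Proof.
move=> nh; apply: eq_ind _ (psums_to _) psums_to_dft _ _.
apply/funext => p; rewrite (sum_Re_hermitian_even _ p F_dft_hermitian _ nh) dft0.
rewrite (dft_half u h nh) !mulrDr; congr (_ + _ + _); first by rewrite /eplus div1r.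
  by rewrite /eminus; ring.
rewrite mulrA mulr_sumr; apply: eq_bigr => k _.
by rewrite [_^-1 * 2]mulrC Re_mul_conjc_omegaE dftE.
Qed.

Lemma psums_to_dft_odd h : n = h.*2.+1 ->
  psums_to (fun j p => c j * ppow u (d j) p)
    (fun p => eplus R n p * Re (F (vplus u)%:C)
       + \sum_(1 <= k < h.+1) (ek R n k p * Re (F (vk u k +i* vtk u k))
                             + etk R n k p * Im (F (vk u k +i* vtk u k)))).
Proof.
move=> nh; apply: eq_ind _ (psums_to _) psums_to_dft _ _.
apply/funext => p; rewrite (sum_Re_hermitian_odd _ p F_dft_hermitian _ nh) dft0 !mulrDr.
congr (_ + _); first by rewrite /eplus div1r.
rewrite mulrA mulr_sumr; apply: eq_bigr => k _.
by rewrite [_^-1 * 2]mulrC Re_mul_conjc_omegaE dftE.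
Qed.

End PowerSeries.

End DiscreteFourierTransform.
Arguments psums_to_dft_even {R n} n_gt0 {c d F} u.
Arguments psums_to_dft_odd {R n} n_gt0 {c d F} u.

Theorem mainTheorem13 (R : realType) (n : nat) (u : pnc R n) :
  (2 <= n)%N ->
  (~~ odd n ->
     psums_to (pcos_term u)
       (fun p => eplus R n p * cos (vplus u) + eminus R n p * cos (vminus u)
          + \sum_(1 <= k < (n %/ 2).-1.+1)
              (ek R n k p * cos (vk u k) * cosh (vtk u k)
               - etk R n k p * sin (vk u k) * sinh (vtk u k))) /\
     psums_to (psin_term u)
       (fun p => eplus R n p * sin (vplus u) + eminus R n p * sin (vminus u)
          + \sum_(1 <= k < (n %/ 2).-1.+1)
              (ek R n k p * sin (vk u k) * cosh (vtk u k)
               + etk R n k p * cos (vk u k) * sinh (vtk u k)))) /\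
  (odd n ->
     psums_to (pcos_term u)
       (fun p => eplus R n p * cos (vplus u)
          + \sum_(1 <= k < (n.-1 %/ 2).+1)
              (ek R n k p * cos (vk u k) * cosh (vtk u k)
               - etk R n k p * sin (vk u k) * sinh (vtk u k))) /\
     psums_to (psin_term u)
       (fun p => eplus R n p * sin (vplus u)
          + \sum_(1 <= k < (n.-1 %/ 2).+1)
              (ek R n k p * sin (vk u k) * cosh (vtk u k)
               + etk R n k p * cos (vk u k) * sinh (vtk u k)))).
Proof.
move=> n_ge2; have n_gt0 : (0 < n)%N by apply: ltnW.
have cos_even := psums_to_dft_even n_gt0 u (@complex_cvg_cosC_series R) (@cosC_conj R).
have sin_even := psums_to_dft_even n_gt0 u (@complex_cvg_sinC_series R) (@sinC_conj R).
have cos_odd := psums_to_dft_odd n_gt0 u (@complex_cvg_cosC_series R) (@cosC_conj R).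
have sin_odd := psums_to_dft_odd n_gt0 u (@complex_cvg_sinC_series R) (@sinC_conj R).
split=> [even_n | odd_n].
- have nh : n = (n %/ 2).*2 by move: (odd_double_half n); rewrite (negbTE even_n); lia.
  rewrite prednK ?divn_gt0 //; split.
  + apply: eq_ind _ (psums_to _) (cos_even _ nh) _ _; apply/funext => p.
    rewrite !cosC_real /=; congr (_ + _); apply: eq_bigr => k _; rewrite /cosC /=; ring.
  + apply: eq_ind _ (psums_to _) (sin_even _ nh) _ _; apply/funext => p.
    rewrite !sinC_real /=; congr (_ + _); apply: eq_bigr => k _; rewrite /sinC /=; ring.
- have nh : n = (n.-1 %/ 2).*2.+1 by move: (odd_double_half n); rewrite odd_n; lia.
  split.
  + apply: eq_ind _ (psums_to _) (cos_odd _ nh) _ _; apply/funext => p.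
    rewrite !cosC_real /=; congr (_ + _); apply: eq_bigr => k _; rewrite /cosC /=; ring.
  + apply: eq_ind _ (psums_to _) (sin_odd _ nh) _ _; apply/funext => p.
    rewrite !sinC_real /=; congr (_ + _); apply: eq_bigr => k _; rewrite /sinC /=; ring.
Qed.
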